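(* Let $P$ be a finite nonempty set of points lying in a single quadrant $Q$ with respect to the origin $s$, and let $e\neq s$ be such that the line $\overline{se}$ is in the quadrant $Q$ and lies between the two bounding lines, i.e. $\theta_{lb} \le \theta_{s,e} \le \theta_{ub}$. Then, with $d^{\max}=\max_{p\in P} d(p,\overline{se})$, $$d^{\max} \ge d^{lb} := \max\Big\{ \min\{d(l_1,\overline{se}),d(l_2,\overline{se})\},\ \min\{d(u_1,\overline{se}),d(u_2,\overline{se})\},\ D\Big\},$$ where $D = d^{corner\text{-}near}$ if $d(s,e) < d(s,c_f)$ and $D = d^{corner\text{-}far}$ if $d(s,e)\ge d(s,c_f)$; and $$d^{\max} \le d^{ub} := \max\{ d^{intersection},\ d^{corner\text{-}far}\},$$ where $d^{intersection}$ here denotes $\max\{d(l_1,\overline{se}),d(l_2,\overline{se}),d(u_1,\overline{se}),d(u_2,\overline{se})\}$.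
   Context: Bounded Quadrant System (BQS) setup. Points are in the plane with UTM-projected $x$ and $y$ axes, and the start point $s$ is taken as the origin. For a point $p\ne s$, $\theta(p)\in[0,2\pi)$ is the angle between the positive $x$ axis and the vector from $s$ to $p$; $\theta_{s,e}=\theta(e)$. The four quadrants are $Q_k=\{p\neq s: (k-1)\pi/2 \le \theta(p) < k\pi/2\}$, $k=1,\dots,4$; quadrant $Q_k$ has angle range $[\theta^Q_{start},\theta^Q_{end}) = [(k-1)\pi/2,k\pi/2)$. A line $\overline{se}$ is ''in'' quadrant $Q$ if $\theta^Q_{start}\le \theta_{s,e}<\theta^Q_{end}$. For a finite nonempty $P\subset Q$: the bounding box is the smallest closed axis-parallel rectangle containing $P$, with corners $c_1,\dots,c_4$; $c_n$ and $c_f$ are the corners of the box nearest to and farthest from the origin $s$ (e.g. in the first quadrant $c_n=(x_{\min},y_{\min})$, $c_f=(x_{\max},y_{\max})$). $\theta_{lb}=\min_{p\in P}\theta(p)$ and $\theta_{ub}=\max_{p\in P}\theta(p)$; the lower (resp. upper) bounding line is the ray from $s$ at angle $\theta_{lb}$ (resp. $\theta_{ub}$). $l_1,l_2$ are the intersection points of the lower bounding line with the boundary of the bounding box and $u_1,u_2$ those of the upper bounding line, with index 1 the intersection nearer to $s$ (they may coincide). $d(p,\overline{se})$ is the Euclidean distance from the point $p$ to the line segment from $s$ to $e$. Notation: $d^{corner}=\{d(c_i,\overline{se}): i=1,\dots,4\}$, $d^{corner\text{-}near}=d(c_n,\overline{se})$, $d^{corner\text{-}far}=d(c_f,\overline{se})$,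 $d^{intersection}=\{d(p,\overline{se}): p\in\{l_1,l_2,u_1,u_2\}\}$. *)

From Stdlib Require Import Reals Lra List.
Open Scope R_scope.

(* Points of the plane; the start point s is the origin (0,0). *)
Definition pt := (R * R)%type.
Definition origin : pt := (0, 0).

Definition pnorm (p : pt) : R := sqrt (fst p * fst p + snd p * snd p).
Definition edist (p q : pt) : R := pnorm (fst p - fst q, snd p - snd q).

Definition theta (p : pt) : R :=
  if Rle_dec 0 (snd p) then acos (fst p / pnorm p)
  else 2 * PI - acos (fst p / pnorm p).

Definition in_quadrant (k : nat) (p : pt) : Prop :=
  p <> origin /\
  INR (k - 1) * (PI / 2) <= theta p < INR k * (PI / 2).

Definition dot (p q : pt) : R := fst p * fst q + snd p * snd q.
Definition clamp01 (t : R) : R := Rmax 0 (Rmin 1 t).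
Definition dseg (p e : pt) : R :=
  let t := clamp01 (dot p e / dot e e) in
  edist p (t * fst e, t * snd e).

(* max / min of a nonempty list (value 0 on the empty list, never used) *)
Definition max_list (l : list R) : R :=
  match l with nil => 0 | x :: t => fold_left Rmax t x end.
Definition min_list (l : list R) : R :=
  match l with nil => 0 | x :: t => fold_left Rmin t x end.

Definition xmin (P : list pt) := min_list (map fst P).
Definition xmax (P : list pt) := max_list (map fst P).
Definition ymin (P : list pt) := min_list (map snd P).
Definition ymax (P : list pt) := max_list (map snd P).

Definition in_box (P : list pt) (q : pt) : Prop :=
  xmin P <= fst q <= xmax P /\ ymin P <= snd q <= ymax P.
Definition on_box_boundary (P : list pt) (q : pt) : Prop :=
  in_box P q /\
  (fst q = xmin P \/ fst q = xmax P \/ snd q = ymin P \/ snd q = ymax P).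

Definition corners (P : list pt) : list pt :=
  (xmin P, ymin P) :: (xmax P, ymin P) :: (xmax P, ymax P) :: (xmin P, ymax P) :: nil.

(* Since P lies in one quadrant,
   all x-coordinates (resp. y-coordinates) have the same sign, so the nearest
   corner takes in each coordinate the bound of smaller absolute value, and the
   farthest one the bound of larger absolute value (e.g. in Q_1:
   c_n = (xmin,ymin), c_f = (xmax,ymax)). *)
Definition near_coord (a b : R) : R := if Rle_dec (Rabs a) (Rabs b) then a else b.
Definition far_coord (a b : R) : R := if Rle_dec (Rabs a) (Rabs b) then b else a.
Definition c_near (P : list pt) : pt :=
  (near_coord (xmin P) (xmax P), near_coord (ymin P) (ymax P)).
Definition c_far (P : list pt) : pt :=
  (far_coord (xmin P) (xmax P), far_coord (ymin P) (ymax P)).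

Definition theta_lb (P : list pt) := min_list (map theta P).
Definition theta_ub (P : list pt) := max_list (map theta P).

Definition on_ray (a : R) (q : pt) : Prop :=
  exists r, 0 <= r /\ q = (r * cos a, r * sin a).

(* (p1, p2) are the intersection points of the ray at angle a with the boundary
   of the bounding box of P, p1 being the one nearer to s (they may coincide):
   both lie on the ray and the boundary, and every intersection point lies
   (along the ray) between them. *)
Definition ray_box_intersections (P : list pt) (a : R) (p1 p2 : pt) : Prop :=
  on_ray a p1 /\ on_box_boundary P p1 /\
  on_ray a p2 /\ on_box_boundary P p2 /\
  pnorm p1 <= pnorm p2 /\
  (forall q, on_ray a q -> on_box_boundary P q -> pnorm p1 <= pnorm q <= pnorm p2).

(** Reflecting in the coordinate axes maps the quadrant onto the first one and preserves
    every distance involved, so we may assume that [P] lies in the first quadrant; its bounding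
    box is then [[X0, X1] x [Y0, Y1]] with [c_n = (X0, Y0)] and [c_f = (X1, Y1)].
    The distance to the segment [se] is convex and vanishes at [s], so on a triangle with a
    vertex at [s] it is bounded by its values at the two other vertices.  Every point of [P]
    lies in the triangle [s l2 c_f] or in [s c_f u2], which gives the upper bound, and [l1]
    lies between [s] and the point of [P] on the lower bounding line (similarly for [u1]).
    For [c_n], moving along a side of the box away from the line [se] does not decrease the
    distance.  Every point [q] is at distance at least [|cross q e| / |e|] from [se], with
    equality at [c_f] when [|se| >= |s c_f|], and [|cross q e|] does not decrease as [q] leaves
    [c_f] along one of the two far sides. *)

From Stdlib Require Import Reals List Lra Lia Psatz.
Open Scope R_scope.

Lemma div_unit_interval a b : 0 < b -> 0 <= a <= b -> 0 <= a / b <= 1.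
Proof.
  intros Hb Ha; split.
  - apply Rmult_le_pos; [lra|apply Rlt_le, Rinv_0_lt_compat, Hb].
  - apply Rmult_le_reg_r with b; [exact Hb|]; rewrite Rmult_1_l; unfold Rdiv.
    rewrite Rmult_assoc, Rinv_l; lra.
Qed.

Definition cross (p q : pt) : R := fst p * snd q - snd p * fst q.
Definition scal (r : R) (p : pt) : pt := (r * fst p, r * snd p).
Definition padd (p q : pt) : pt := (fst p + fst q, snd p + snd q).

Lemma pnorm_ge0 p : 0 <= pnorm p.
Proof. apply sqrt_pos. Qed.

Lemma pnorm_sq p : pnorm p * pnorm p = dot p p.
Proof. unfold pnorm, dot; apply sqrt_sqrt; nra. Qed.

Lemma pnorm_gt0 p : p <> origin -> 0 < pnorm p.
Proof.
  intros Hp; apply sqrt_lt_R0; destruct p as [x y]; simpl.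
  destruct (Req_dec x 0), (Req_dec y 0); subst; [now exfalso; apply Hp | nra..].
Qed.

Lemma pnorm_le p q : dot p p <= dot q q -> pnorm p <= pnorm q.
Proof. apply sqrt_le_1_alt. Qed.

Lemma pnorm_le_sq p q : pnorm p <= pnorm q -> dot p p <= dot q q.
Proof. intros; rewrite <- !pnorm_sq; pose proof (pnorm_ge0 p); nra. Qed.

Lemma pnorm_scal r p : 0 <= r -> pnorm (scal r p) = r * pnorm p.
Proof.
  intros Hr; rewrite <- (sqrt_square r) at 2 by exact Hr.
  unfold pnorm, scal; simpl; rewrite <- sqrt_mult_alt by nra; f_equal; ring.
Qed.

Lemma pnorm_triangle p q : pnorm (padd p q) <= pnorm p + pnorm q.
Proof.
  pose proof (pnorm_sq p) as Hp; pose proof (pnorm_sq q) as Hq.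
  pose proof (pnorm_ge0 p); pose proof (pnorm_ge0 q).
  assert (Hcs : dot p q <= pnorm p * pnorm q).
  { assert (dot p q * dot p q <= (pnorm p * pnorm p) * (pnorm q * pnorm q)).
    { rewrite Hp, Hq; unfold dot.
      pose proof (Rle_0_sqr (fst p * snd q - snd p * fst q)); unfold Rsqr in *; nra. }
    assert (0 <= pnorm p * pnorm q) by (apply Rmult_le_pos; assumption); nra. }
  rewrite <- (sqrt_square (pnorm p + pnorm q)) by lra.
  apply sqrt_le_1_alt; unfold dot, padd in *; simpl in *; nra.
Qed.

Lemma edist_origin q : edist origin q = pnorm q.
Proof. unfold edist, pnorm, origin; simpl; f_equal; ring. Qed.

Lemma clamp01_bounds t : 0 <= clamp01 t <= 1.
Proof. unfold clamp01, Rmax, Rmin; repeat destruct Rle_dec; lra. Qed.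

Lemma clamp01_le0 t : t <= 0 -> clamp01 t = 0.
Proof. intros; unfold clamp01, Rmax, Rmin; repeat destruct Rle_dec; lra. Qed.

Lemma clamp01_ge1 t : 1 <= t -> clamp01 t = 1.
Proof. intros; unfold clamp01, Rmax, Rmin; repeat destruct Rle_dec; lra. Qed.

Lemma clamp01_id t : 0 <= t <= 1 -> clamp01 t = t.
Proof. intros; unfold clamp01, Rmax, Rmin; repeat destruct Rle_dec; lra. Qed.

Definition seg_sqdist (q e : pt) (t : R) : R :=
  (fst q - t * fst e) * (fst q - t * fst e) + (snd q - t * snd e) * (snd q - t * snd e).

Definition seg_param (q e : pt) : R := clamp01 (dot q e / dot e e).

Lemma dseg_sqrt q e : dseg q e = sqrt (seg_sqdist q e (seg_param q e)).
Proof. reflexivity. Qed.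

Lemma dseg_ge0 q e : 0 <= dseg q e.
Proof. apply sqrt_pos. Qed.

Lemma dseg_sq q e : dseg q e * dseg q e = seg_sqdist q e (seg_param q e).
Proof. apply sqrt_sqrt; unfold seg_sqdist; apply Rplus_le_le_0_compat; apply Rle_0_sqr. Qed.

Lemma seg_sqdist_expand q e t : seg_sqdist q e t = dot q q - 2 * t * dot q e + t * t * dot e e.
Proof. unfold seg_sqdist, dot; ring. Qed.

Lemma seg_sqdist_lagrange q e t : dot e e * seg_sqdist q e t =
  (t * dot e e - dot q e) * (t * dot e e - dot q e) + cross q e * cross q e.
Proof. unfold seg_sqdist, dot, cross; ring. Qed.

Lemma seg_param_minimal q e t : 0 < dot e e -> 0 <= t <= 1 ->
  seg_sqdist q e (seg_param q e) <= seg_sqdist q e t.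
Proof.
  intros He Ht; unfold seg_param; set (t0 := dot q e / dot e e).
  assert (Hqe : dot q e = t0 * dot e e) by (unfold t0; field; lra).
  rewrite !seg_sqdist_expand, Hqe.
  destruct (Rle_dec t0 0); [|destruct (Rle_dec 1 t0)].
  - rewrite clamp01_le0 by assumption.
    assert (0 <= t * (t - 2 * t0) * dot e e) by (apply Rmult_le_pos; [apply Rmult_le_pos|]; lra).
    nra.
  - rewrite clamp01_ge1 by assumption.
    assert (0 <= (1 - t) * (2 * t0 - 1 - t) * dot e e)
      by (apply Rmult_le_pos; [apply Rmult_le_pos|]; lra).
    nra.
  - rewrite clamp01_id by lra.
    assert (0 <= (t - t0) * (t - t0) * dot e e) by (apply Rmult_le_pos; [apply Rle_0_sqr|]; lra).
    nra.
Qed.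

Lemma dseg_le_dist q e t : 0 < dot e e -> 0 <= t <= 1 ->
  dseg q e <= pnorm (fst q - t * fst e, snd q - t * snd e).
Proof. intros; apply sqrt_le_1_alt, seg_param_minimal; assumption. Qed.

(* The missing weight [1 - al - be] sits at the origin, which is at distance 0. *)
Lemma dseg_convex a b e al be : 0 <= al -> 0 <= be -> al + be <= 1 -> 0 < dot e e ->
  dseg (al * fst a + be * fst b, al * snd a + be * snd b) e <= al * dseg a e + be * dseg b e.
Proof.
  intros Hal Hbe Hsum He.
  pose proof (clamp01_bounds (dot a e / dot e e)); pose proof (clamp01_bounds (dot b e / dot e e)).
  eapply Rle_trans;
    [apply (dseg_le_dist _ e (al * seg_param a e + be * seg_param b e)); unfold seg_param; nra|].
  rewrite !dseg_sqrt.
  change (sqrt (seg_sqdist ?q e ?t)) with (pnorm (fst q - t * fst e, snd q - t * snd e)).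
  rewrite <- !pnorm_scal by assumption.
  eapply Rle_trans; [|apply pnorm_triangle]; apply pnorm_le; unfold scal, padd, dot; simpl; nra.
Qed.

Lemma dseg_convex_max a b e al be : 0 <= al -> 0 <= be -> al + be <= 1 -> 0 < dot e e ->
  dseg (al * fst a + be * fst b, al * snd a + be * snd b) e <= Rmax (dseg a e) (dseg b e).
Proof.
  intros; eapply Rle_trans; [apply dseg_convex; assumption|].
  pose proof (dseg_ge0 a e); pose proof (dseg_ge0 b e).
  pose proof (Rmax_l (dseg a e) (dseg b e)); pose proof (Rmax_r (dseg a e) (dseg b e)); nra.
Qed.

Lemma dseg_scal_le a e r : 0 <= r <= 1 -> 0 < dot e e -> dseg (scal r a) e <= dseg a e.
Proof.
  intros Hr He; unfold scal.
  replace (r * fst a, r * snd a) with (r * fst a + 0 * fst a, r * snd a + 0 * snd a)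
    by (f_equal; ring).
  eapply Rle_trans; [apply dseg_convex; lra|]; pose proof (dseg_ge0 a e); nra.
Qed.

Lemma dseg_le_of_sq p q e : dseg p e * dseg p e <= dseg q e * dseg q e -> dseg p e <= dseg q e.
Proof. pose proof (dseg_ge0 p e); pose proof (dseg_ge0 q e); nra. Qed.

Lemma dseg_cross_le q e : 0 < dot e e -> cross q e * cross q e <= dot e e * (dseg q e * dseg q e).
Proof.
  intros; rewrite dseg_sq, seg_sqdist_lagrange.
  pose proof (Rle_0_sqr (seg_param q e * dot e e - dot q e)); unfold Rsqr in *; lra.
Qed.

Lemma dseg_cross_eq q e : 0 < dot e e -> 0 <= dot q e <= dot e e ->
  dot e e * (dseg q e * dseg q e) = cross q e * cross q e.
Proof.
  intros He Hq; rewrite dseg_sq, seg_sqdist_lagrange; unfold seg_param.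
  rewrite clamp01_id.
  - replace (dot q e / dot e e * dot e e - dot q e) with 0 by (field; lra); ring.
  - apply div_unit_interval; lra.
Qed.

Lemma dseg_beyond q e : 0 < dot e e -> dot e e <= dot q e ->
  dseg q e * dseg q e = (fst q - fst e) * (fst q - fst e) + (snd q - snd e) * (snd q - snd e).
Proof.
  intros He Hq; rewrite dseg_sq; unfold seg_param.
  rewrite clamp01_ge1; [unfold seg_sqdist; ring|].
  apply Rmult_le_reg_r with (dot e e); [lra|]; unfold Rdiv; rewrite Rmult_assoc, Rinv_l; lra.
Qed.

(* Moving [q] by [d] away from the line through [e], without moving back along [e],
   does not bring it closer to the segment. *)
Lemma dseg_le_translate q d e : 0 < dot e e -> 0 <= dot q e -> 0 <= dot d e ->
  0 <= cross q e * cross d e -> dseg q e <= dseg (padd q d) e.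
Proof.
  intros He Hq Hd Hc; apply dseg_le_of_sq.
  assert (Hcross : cross (padd q d) e = cross q e + cross d e) by (unfold cross, padd; simpl; ring).
  destruct (Rle_dec (dot q e) (dot e e)).
  - apply Rmult_le_reg_l with (dot e e); [assumption|].
    rewrite dseg_cross_eq by lra.
    eapply Rle_trans; [|apply dseg_cross_le; assumption]; rewrite Hcross; nra.
  - assert (Hdot : dot (padd q d) e = dot q e + dot d e) by (unfold dot, padd; simpl; ring).
    rewrite !dseg_beyond by lra.
    assert (Hid : dot e e * (fst d * (fst q - fst e) + snd d * (snd q - snd e))
                  = dot d e * (dot q e - dot e e) + cross d e * cross q e)
      by (unfold dot, cross; ring).
    assert (0 <= fst d * (fst q - fst e) + snd d * (snd q - snd e)).
    { apply Rmult_le_reg_l with (dot e e); [assumption|]; rewrite Rmult_0_r, Hid; nra. }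
    unfold padd; simpl; nra.
Qed.

Lemma dseg_near_corner_le X0 Y0 p1 p2 e :
  0 <= X0 -> 0 <= Y0 -> 0 <= fst e -> 0 <= snd e -> 0 < dot e e ->
  fst p1 = X0 -> Y0 <= snd p1 -> snd p2 = Y0 -> X0 <= fst p2 ->
  dseg (X0, Y0) e <= Rmax (dseg p1 e) (dseg p2 e).
Proof.
  intros HX HY Hex Hey He. destruct p1 as [a1 b1], p2 as [a2 b2]; simpl; intros -> Hb1 -> Ha2.
  assert (Hdot : 0 <= dot (X0, Y0) e) by (unfold dot; simpl; nra).
  destruct (Rle_dec 0 (cross (X0, Y0) e)) as [Hc|Hc].
  - eapply Rle_trans; [|apply Rmax_r].
    replace (a2, Y0) with (padd (X0, Y0) (a2 - X0, 0)) by (unfold padd; simpl; f_equal; ring).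
    apply dseg_le_translate; [assumption..| |apply Rmult_le_pos; [exact Hc|]];
      unfold dot, cross; simpl; nra.
  - eapply Rle_trans; [|apply Rmax_l].
    replace (X0, b1) with (padd (X0, Y0) (0, b1 - Y0)) by (unfold padd; simpl; f_equal; ring).
    apply dseg_le_translate; [assumption..| |]; [unfold dot; simpl; nra|].
    replace (cross (X0, Y0) e * cross (0, b1 - Y0) e)
      with (- cross (X0, Y0) e * ((b1 - Y0) * fst e)) by (unfold cross; simpl; ring).
    apply Rmult_le_pos; nra.
Qed.

Lemma dseg_far_corner_le X1 Y1 p1 p2 e :
  0 <= X1 -> 0 <= Y1 -> 0 <= fst e -> 0 <= snd e -> 0 < dot e e ->
  pnorm (X1, Y1) <= pnorm e ->
  fst p1 = X1 -> 0 <= snd p1 <= Y1 -> snd p2 = Y1 -> 0 <= fst p2 <= X1 ->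
  dseg (X1, Y1) e <= Rmax (dseg p1 e) (dseg p2 e).
Proof.
  intros HX HY Hex Hey He Hn; apply pnorm_le_sq in Hn.
  destruct p1 as [a1 b1], p2 as [a2 b2]; simpl; intros -> Hb1 -> Ha2.
  assert (Hproj : 0 <= dot (X1, Y1) e <= dot e e).
  { split; [unfold dot; simpl; nra|].
    assert (dot (X1, Y1) e * dot (X1, Y1) e <= dot e e * dot e e); [|nra].
    apply Rle_trans with (dot (X1, Y1) (X1, Y1) * dot e e).
    - unfold dot; simpl; pose proof (Rle_0_sqr (X1 * snd e - Y1 * fst e)); unfold Rsqr in *; nra.
    - apply Rmult_le_compat_r; lra. }
  assert (Heq := dseg_cross_eq (X1, Y1) e He Hproj).
  destruct (Rle_dec 0 (cross (X1, Y1) e)).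
  - eapply Rle_trans; [|apply Rmax_l].
    apply dseg_le_of_sq, Rmult_le_reg_l with (dot e e); [assumption|]; rewrite Heq.
    eapply Rle_trans; [|apply dseg_cross_le; assumption].
    assert (cross (X1, Y1) e <= cross (X1, b1) e) by (unfold cross; simpl; nra); nra.
  - eapply Rle_trans; [|apply Rmax_r].
    apply dseg_le_of_sq, Rmult_le_reg_l with (dot e e); [assumption|]; rewrite Heq.
    eapply Rle_trans; [|apply dseg_cross_le; assumption].
    assert (cross (a2, Y1) e <= cross (X1, Y1) e) by (unfold cross; simpl; nra); nra.
Qed.

(* Cramer's rule: [cross l c * p = cross p c * l + cross l p * c]. *)
Lemma dseg_cone_le l c p e : 0 < dot e e -> 0 < cross l c ->
  0 <= cross l p -> 0 <= cross p c -> cross l p + cross p c <= cross l c ->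
  dseg p e <= Rmax (dseg l e) (dseg c e).
Proof.
  intros He HK Hlp Hpc Hsum.
  replace p with (cross p c / cross l c * fst l + cross l p / cross l c * fst c,
                  cross p c / cross l c * snd l + cross l p / cross l c * snd c)
    by (destruct p; unfold cross; simpl; f_equal; field; unfold cross in HK; lra).
  apply dseg_convex_max; [apply div_unit_interval; lra..| |exact He].
  rewrite <- Rdiv_plus_distr; apply div_unit_interval; lra.
Qed.

Lemma dseg_collinear_le l p e : 0 < dot e e -> 0 < dot l l -> cross l p = 0 ->
  0 <= dot l p <= dot l l -> dseg p e <= dseg l e.
Proof.
  intros He Hl Hc Hd.
  replace p with (scal (dot l p / dot l l) l).
  - apply dseg_scal_le; [apply div_unit_interval|]; assumption.
  - destruct p as [x y], l as [a b]; unfold scal, dot, cross in *; simpl in *.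
    assert (Hay : a * y = b * x) by lra.
    f_equal; field_simplify_eq; try lra.
    + replace (a * b * y) with (b * (a * y)) by ring; rewrite Hay; ring.
    + replace (a * x * b) with (a * (b * x)) by ring; rewrite <- Hay; ring.
Qed.

Lemma dseg_le_far_triangle X1 Y1 p l e : 0 < dot e e ->
  0 <= fst p <= X1 -> 0 <= snd p <= Y1 -> (0 < fst p \/ 0 < snd p) ->
  0 <= fst l <= X1 -> 0 <= snd l <= Y1 -> (fst l = X1 /\ 0 < X1 \/ snd l = Y1 /\ 0 < Y1) ->
  0 <= cross l p -> 0 <= cross p (X1, Y1) -> dseg p e <= Rmax (dseg l e) (dseg (X1, Y1) e).
Proof.
  intros He Hpx Hpy Hp Hlx Hly Hfar Hlp Hpc.
  assert (Hid : cross l (X1, Y1) * dot p p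
                = cross l p * dot p (X1, Y1) + cross p (X1, Y1) * dot l p)
    by (unfold cross, dot; simpl; ring).
  assert (Hpc_dot : 0 < dot p (X1, Y1)) by (unfold dot; simpl; destruct Hp; nra).
  assert (Hlp_dot : 0 <= dot l p) by (unfold dot; nra).
  assert (Hpp : 0 < dot p p) by (unfold dot; destruct Hp; nra).
  destruct (Rlt_dec 0 (cross l (X1, Y1))) as [HK|HK].
  - assert (Hl : fst l = X1).
    { destruct Hfar as [[Hl _]|[Hl _]]; [exact Hl|].
      unfold cross in HK; simpl in HK; rewrite Hl in HK; nra. }
    apply dseg_cone_le; try assumption.
    unfold cross in *; simpl in *; rewrite Hl in *; nra.
  - assert (Hcol : cross l p = 0).
    { assert (0 <= cross p (X1, Y1) * dot l p) by (apply Rmult_le_pos; assumption).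
      assert (Hprod : cross l p * dot p (X1, Y1) = 0) by nra.
      apply Rmult_integral in Hprod; destruct Hprod; lra. }
    eapply Rle_trans; [|apply Rmax_l]; apply dseg_collinear_le; try assumption.
    + unfold dot; destruct Hfar as [[-> ?]|[-> ?]]; nra.
    + split; [assumption|].
      destruct l as [a b], p as [x y]; unfold dot, cross in *; simpl in *.
      destruct Hfar as [[-> ?]|[-> ?]].
      * apply Rmult_le_reg_l with X1; [assumption|].
        replace (X1 * (X1 * x + b * y)) with (x * (X1 * X1 + b * b)) by nra; nra.
      * apply Rmult_le_reg_l with Y1; [assumption|].
        replace (Y1 * (a * x + Y1 * y)) with (y * (a * a + Y1 * Y1)) by nra; nra.
Qed.

Lemma fold_left_Rmax_spec t a : (fold_left Rmax t a = a \/ In (fold_left Rmax t a) t) /\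
  a <= fold_left Rmax t a /\ (forall x, In x t -> x <= fold_left Rmax t a).
Proof.
  revert a; induction t as [|b t IH]; intros a; simpl.
  - split; [left; reflexivity|]; split; [lra|intros x []].
  - destruct (IH (Rmax a b)) as [H1 [H2 H3]]; split; [|split].
    + destruct H1 as [H1|H1]; [|right; right; assumption].
      rewrite H1; unfold Rmax; destruct Rle_dec; [right; left|left]; reflexivity.
    + eapply Rle_trans; [apply Rmax_l|exact H2].
    + intros x [<-|Hx]; [eapply Rle_trans; [apply Rmax_r|exact H2]|auto].
Qed.

Lemma fold_left_Rmin_spec t a : (fold_left Rmin t a = a \/ In (fold_left Rmin t a) t) /\
  fold_left Rmin t a <= a /\ (forall x, In x t -> fold_left Rmin t a <= x).
Proof.
  revert a; induction t as [|b t IH]; intros a; simpl.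
  - split; [left; reflexivity|]; split; [lra|intros x []].
  - destruct (IH (Rmin a b)) as [H1 [H2 H3]]; split; [|split].
    + destruct H1 as [H1|H1]; [|right; right; assumption].
      rewrite H1; unfold Rmin; destruct Rle_dec; [left|right; left]; reflexivity.
    + eapply Rle_trans; [exact H2|apply Rmin_l].
    + intros x [<-|Hx]; [eapply Rle_trans; [exact H2|apply Rmin_r]|auto].
Qed.

Lemma max_list_ge l x : In x l -> x <= max_list l.
Proof.
  destruct l as [|a t]; [intros []|]; simpl.
  destruct (fold_left_Rmax_spec t a) as [_ [H2 H3]]; intros [<-|Hx]; auto.
Qed.

Lemma max_list_in l : l <> nil -> In (max_list l) l.
Proof.
  destruct l as [|a t]; [tauto|]; intros _; simpl.
  destruct (fold_left_Rmax_spec t a) as [[H|H] _]; [left|right]; auto.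
Qed.

Lemma min_list_le l x : In x l -> min_list l <= x.
Proof.
  destruct l as [|a t]; [intros []|]; simpl.
  destruct (fold_left_Rmin_spec t a) as [_ [H2 H3]]; intros [<-|Hx]; auto.
Qed.

Lemma min_list_in l : l <> nil -> In (min_list l) l.
Proof.
  destruct l as [|a t]; [tauto|]; intros _; simpl.
  destruct (fold_left_Rmin_spec t a) as [[H|H] _]; [left|right]; auto.
Qed.

Definition dmax (P : list pt) (e : pt) : R := max_list (map (fun p => dseg p e) P).

Lemma dseg_le_dmax P e p : In p P -> dseg p e <= dmax P e.
Proof. intros; apply max_list_ge, in_map_iff; exists p; auto. Qed.

Lemma dmax_le P e M : P <> nil -> (forall p, In p P -> dseg p e <= M) -> dmax P e <= M.
Proof.
  intros HP HM; unfold dmax.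
  assert (Hne : map (fun p => dseg p e) P <> nil) by (intros H; apply HP, (map_eq_nil _ _ H)).
  destruct (proj1 (in_map_iff _ _ _) (max_list_in _ Hne)) as [p [<- Hp]]; auto.
Qed.

Definition swap (q : pt) : pt := (snd q, fst q).

Lemma dseg_swap q e : dseg (swap q) (swap e) = dseg q e.
Proof.
  unfold dseg, swap, seg_param, edist, pnorm, dot; simpl.
  rewrite (Rplus_comm (snd q * snd e)), (Rplus_comm (snd e * snd e)).
  f_equal; ring.
Qed.

Section FirstQuadrantRectangle.

Variables X0 X1 Y0 Y1 : R.
Hypothesis X0_ge0 : 0 <= X0.
Hypothesis Y0_ge0 : 0 <= Y0.
Hypothesis near_corner_nonzero : 0 < X0 \/ 0 < Y0.

Definition in_rect (q : pt) : Prop := X0 <= fst q <= X1 /\ Y0 <= snd q <= Y1.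

Definition on_rect_boundary (q : pt) : Prop :=
  in_rect q /\ (fst q = X0 \/ fst q = X1 \/ snd q = Y0 \/ snd q = Y1).

Definition on_halfline (a q : pt) : Prop := exists r, 0 <= r /\ q = scal r a.

Definition halfline_rect_exits (a q1 q2 : pt) : Prop :=
  on_halfline a q1 /\ on_rect_boundary q1 /\ on_halfline a q2 /\ on_rect_boundary q2 /\
  (forall q, on_halfline a q -> on_rect_boundary q -> pnorm q1 <= pnorm q <= pnorm q2).

Lemma in_rect_nonzero q : in_rect q -> 0 < fst q \/ 0 < snd q.
Proof. intros [Hx Hy]; destruct near_corner_nonzero; [left|right]; lra. Qed.

Lemma halfline_enters_rect q : in_rect q ->
  exists t, 0 <= t <= 1 /\ on_rect_boundary (scal t q).
Proof.
  intros Hq; pose proof (in_rect_nonzero q Hq) as Hnz.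
  destruct q as [x y]; unfold on_rect_boundary, in_rect, scal in *; simpl in *.
  destruct (Rlt_dec 0 x) as [Hx|Hx]; [destruct (Rle_dec (Y0 * x) (X0 * y)) as [Hs|Hs]|].
  - exists (X0 / x); split; [apply div_unit_interval; lra|].
    assert (Ht : X0 / x * x = X0) by (field; lra).
    assert (Hty : (X0 / x * y) * x = X0 * y) by (field; lra).
    rewrite Ht; split; [split; split; nra|left; reflexivity].
  - assert (Hy : 0 < y) by nra.
    exists (Y0 / y); split; [apply div_unit_interval; lra|].
    assert (Ht : Y0 / y * y = Y0) by (field; lra).
    assert (Htx : (Y0 / y * x) * y = Y0 * x) by (field; lra).
    rewrite Ht; split; [split; split; nra|right; right; left; reflexivity].
  - assert (Hy : 0 < y) by lra.
    exists (Y0 / y); split; [apply div_unit_interval; lra|].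
    assert (Ht : Y0 / y * y = Y0) by (field; lra).
    replace (Y0 / y * x) with 0 by (replace x with 0 by lra; ring).
    rewrite Ht; split; [split; split; lra|right; right; left; reflexivity].
Qed.

Lemma halfline_leaves_rect q : in_rect q ->
  exists s, 1 <= s /\ in_rect (scal s q) /\
    (fst (scal s q) = X1 /\ 0 < X1 \/ snd (scal s q) = Y1 /\ 0 < Y1).
Proof.
  intros Hq; pose proof (in_rect_nonzero q Hq) as Hnz.
  destruct q as [x y]; unfold in_rect, scal in *; simpl in *.
  destruct (Rlt_dec 0 x) as [Hx|Hx]; [destruct (Rle_dec (X1 * y) (Y1 * x)) as [Hs|Hs]|].
  - exists (X1 / x).
    assert (Ht : X1 / x * x = X1) by (field; lra).
    assert (Hty : (X1 / x * y) * x = X1 * y) by (field; lra).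
    rewrite Ht; split; [|split; [split; split; nra|left; split; lra]].
    apply Rmult_le_reg_r with x; [assumption|]; lra.
  - assert (Hy : 0 < y) by nra.
    exists (Y1 / y).
    assert (Ht : Y1 / y * y = Y1) by (field; lra).
    assert (Htx : (Y1 / y * x) * y = Y1 * x) by (field; lra).
    rewrite Ht; split; [|split; [split; split; nra|right; split; lra]].
    apply Rmult_le_reg_r with y; [assumption|]; lra.
  - assert (Hy : 0 < y) by lra.
    exists (Y1 / y).
    assert (Ht : Y1 / y * y = Y1) by (field; lra).
    replace (Y1 / y * x) with 0 by (replace x with 0 by lra; ring).
    rewrite Ht; split; [|split; [split; split; lra|right; split; lra]].
    apply Rmult_le_reg_r with y; [assumption|]; lra.
Qed.

Lemma in_rect_pnorm_gt0 q : in_rect q -> 0 < pnorm q.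
Proof.
  intros Hq; apply pnorm_gt0; intros ->.
  destruct (in_rect_nonzero _ Hq); simpl in *; lra.
Qed.

Lemma on_halfline_scal a q s : on_halfline a q -> 0 <= s -> on_halfline a (scal s q).
Proof.
  intros [r [Hr ->]] Hs; exists (s * r); split; [nra|unfold scal; simpl; f_equal; ring].
Qed.

Lemma far_exit_on_far_side a q1 q2 : halfline_rect_exits a q1 q2 ->
  fst q2 = X1 /\ 0 < X1 \/ snd q2 = Y1 /\ 0 < Y1.
Proof.
  intros (_ & _ & Hq2 & [Hrect _] & Hext).
  destruct (halfline_leaves_rect q2 Hrect) as (s & Hs & Hsrect & Hfar).
  assert (Hbnd : on_rect_boundary (scal s q2)) by (split; [|tauto]; exact Hsrect).
  assert (Hray : on_halfline a (scal s q2)) by (apply on_halfline_scal; [exact Hq2|lra]).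
  pose proof (proj2 (Hext _ Hray Hbnd)) as Hle.
  rewrite pnorm_scal in Hle by lra.
  pose proof (in_rect_pnorm_gt0 _ Hrect).
  assert (s <= 1) by nra; replace s with 1 in Hfar by lra.
  unfold scal in Hfar; simpl in Hfar; rewrite !Rmult_1_l in Hfar; exact Hfar.
Qed.

Lemma dseg_near_exit_le a q1 q2 e : 0 < dot e e -> in_rect a ->
  halfline_rect_exits a q1 q2 -> dseg q1 e <= dseg a e.
Proof.
  intros He Ha ([r [Hr ->]] & _ & _ & _ & Hext).
  destruct (halfline_enters_rect a Ha) as (t & Ht & Hbnd).
  assert (Hray : on_halfline a (scal t a)) by (exists t; split; [lra|reflexivity]).
  pose proof (proj1 (Hext _ Hray Hbnd)) as Hle.
  rewrite !pnorm_scal in Hle by lra.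
  pose proof (in_rect_pnorm_gt0 _ Ha).
  apply dseg_scal_le; [nra|assumption].
Qed.

Lemma dseg_le_wedge_exits pa pb l1 l2 u1 u2 p e : 0 < dot e e -> in_rect p ->
  halfline_rect_exits pa l1 l2 -> halfline_rect_exits pb u1 u2 ->
  0 <= cross pa p -> 0 <= cross p pb ->
  dseg p e <= Rmax (dseg l2 e) (Rmax (dseg (X1, Y1) e) (dseg u2 e)).
Proof.
  intros He Hp Hl Hu Hpa Hpb.
  pose proof (far_exit_on_far_side _ _ _ Hl) as Hlfar.
  pose proof (far_exit_on_far_side _ _ _ Hu) as Hufar.
  destruct Hl as (_ & _ & [r [Hr Hl2]] & [Hl2rect _] & _).
  destruct Hu as (_ & _ & [r' [Hr' Hu2]] & [Hu2rect _] & _).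
  assert (Hl2p : 0 <= cross l2 p) by (rewrite Hl2; unfold cross, scal in *; simpl; nra).
  assert (Hpu2 : 0 <= cross p u2) by (rewrite Hu2; unfold cross, scal in *; simpl; nra).
  pose proof (in_rect_nonzero _ Hp) as Hnz.
  unfold in_rect in *.
  assert (Hmax_l : forall x y z : R, Rmax x y <= Rmax x (Rmax y z))
    by (intros; unfold Rmax; repeat destruct Rle_dec; lra).
  assert (Hmax_r : forall x y z : R, Rmax z y <= Rmax x (Rmax y z))
    by (intros; unfold Rmax; repeat destruct Rle_dec; lra).
  (* [p] lies on the [l2] side or on the [u2] side of the diagonal through the far corner;
     the second case is the first one with the axes swapped. *)
  destruct (Rle_dec 0 (cross p (X1, Y1))) as [Hdiag|Hdiag].
  - eapply Rle_trans; [|apply Hmax_l].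
    apply (dseg_le_far_triangle X1 Y1 p l2 e He); (assumption || lra).
  - eapply Rle_trans; [|apply Hmax_r].
    assert (Hswap : 0 < dot (swap e) (swap e)) by (unfold dot, swap in *; simpl; lra).
    rewrite <- (dseg_swap p), <- (dseg_swap u2), <- (dseg_swap (X1, Y1)).
    apply (dseg_le_far_triangle Y1 X1 (swap p) (swap u2) (swap e) Hswap);
      unfold swap, cross in *; simpl in *; (tauto || lra).
Qed.

Variable P : list pt.
Variable e : pt.
Hypothesis P_in_rect : forall p, In p P -> in_rect p.
Hypothesis e_fst_ge0 : 0 <= fst e.
Hypothesis e_snd_ge0 : 0 <= snd e.
Hypothesis e_nonzero : 0 < dot e e.

Lemma near_corner_le_dmax : (exists p, In p P /\ fst p = X0) -> (exists p, In p P /\ snd p = Y0) ->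
  dseg (X0, Y0) e <= dmax P e.
Proof.
  intros [p1 [Hp1 Hx]] [p2 [Hp2 Hy]].
  destruct (P_in_rect p1 Hp1), (P_in_rect p2 Hp2).
  eapply Rle_trans; [apply (dseg_near_corner_le X0 Y0 p1 p2 e); (assumption || lra)|].
  apply Rmax_lub; apply dseg_le_dmax; assumption.
Qed.

Lemma far_corner_le_dmax : (exists p, In p P /\ fst p = X1) -> (exists p, In p P /\ snd p = Y1) ->
  pnorm (X1, Y1) <= pnorm e -> dseg (X1, Y1) e <= dmax P e.
Proof.
  intros [p1 [Hp1 Hx]] [p2 [Hp2 Hy]] Hn.
  destruct (P_in_rect p1 Hp1), (P_in_rect p2 Hp2).
  eapply Rle_trans; [apply (dseg_far_corner_le X1 Y1 p1 p2 e); (assumption || lra)|].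
  apply Rmax_lub; apply dseg_le_dmax; assumption.
Qed.

Lemma exit_min_le_dmax a q1 q2 : In a P -> halfline_rect_exits a q1 q2 ->
  Rmin (dseg q1 e) (dseg q2 e) <= dmax P e.
Proof.
  intros Ha Hq; eapply Rle_trans; [apply Rmin_l|].
  eapply Rle_trans; [apply (dseg_near_exit_le a q1 q2); auto|apply dseg_le_dmax; assumption].
Qed.

Lemma dmax_le_wedge_exits pa pb l1 l2 u1 u2 : P <> nil ->
  (forall p, In p P -> 0 <= cross pa p /\ 0 <= cross p pb) ->
  halfline_rect_exits pa l1 l2 -> halfline_rect_exits pb u1 u2 ->
  dmax P e <= Rmax (dseg l2 e) (Rmax (dseg (X1, Y1) e) (dseg u2 e)).
Proof.
  intros HP Hwedge Hl Hu; apply dmax_le; [assumption|].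
  intros p Hp; destruct (Hwedge p Hp).
  apply (dseg_le_wedge_exits pa pb l1 l2 u1 u2); auto.
Qed.

End FirstQuadrantRectangle.

Lemma cos_sin_theta p : p <> origin ->
  cos (theta p) = fst p / pnorm p /\ sin (theta p) = snd p / pnorm p.
Proof.
  intros Hp; pose proof (pnorm_gt0 p Hp) as HN; pose proof (pnorm_sq p) as HS.
  set (N := pnorm p) in *; destruct p as [x y]; unfold dot in HS; simpl in *.
  assert (Hc : -1 <= x / N <= 1).
  { assert (x * x <= N * N) by nra.
    split; apply Rmult_le_reg_r with N; try assumption;
      unfold Rdiv; rewrite Rmult_assoc, Rinv_l by lra; nra. }
  assert (Hsin : 1 - (x / N)² = (y / N) * (y / N)).
  { unfold Rsqr; replace (y / N * (y / N)) with ((y * y) / (N * N)) by (field; lra).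
    replace (y * y) with (N * N - x * x) by lra; field; lra. }
  unfold theta; simpl; fold N; destruct (Rle_dec 0 y).
  - rewrite cos_acos, sin_acos by assumption; split; [reflexivity|].
    rewrite Hsin; apply sqrt_square, Rmult_le_pos; [assumption|apply Rlt_le, Rinv_0_lt_compat, HN].
  - rewrite cos_minus, sin_minus, cos_2PI, sin_2PI, cos_acos, sin_acos by assumption.
    rewrite Hsin; replace (y / N * (y / N)) with ((- (y / N)) * (- (y / N))) by ring.
    rewrite sqrt_square; [split; ring|].
    unfold Rdiv; assert (0 < / N) by (apply Rinv_0_lt_compat; assumption); nra.
Qed.

Lemma pt_polar p : p <> origin ->
  fst p = pnorm p * cos (theta p) /\ snd p = pnorm p * sin (theta p).
Proof.
  intros Hp; destruct (cos_sin_theta p Hp) as [-> ->]; pose proof (pnorm_gt0 p Hp).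
  split; field; lra.
Qed.

(* Within one quadrant angles differ by less than [PI / 2], so their order is the
   orientation of the pair. *)
Lemma cross_nonneg_of_theta_le k p q : (1 <= k <= 4)%nat ->
  in_quadrant k p -> in_quadrant k q -> theta p <= theta q -> 0 <= cross p q.
Proof.
  intros Hk [Hp0 Hp] [Hq0 Hq] Hle.
  destruct (pt_polar p Hp0) as [Hp1 Hp2], (pt_polar q Hq0) as [Hq1 Hq2].
  unfold cross; rewrite Hp1, Hp2, Hq1, Hq2.
  replace (pnorm p * cos (theta p) * (pnorm q * sin (theta q))
           - pnorm p * sin (theta p) * (pnorm q * cos (theta q)))
    with (pnorm p * pnorm q * sin (theta q - theta p)) by (rewrite sin_minus; ring).
  apply Rmult_le_pos; [apply Rmult_le_pos; apply pnorm_ge0|].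
  assert (HSk : INR k = INR (k - 1) + 1) by (rewrite <- S_INR; f_equal; lia).
  pose proof PI_RGT_0; apply sin_ge_0; nra.
Qed.

Ltac polar_in_quadrant q Hq :=
  destruct (pt_polar q (proj1 Hq)) as [-> ->]; pose proof (pnorm_gt0 q (proj1 Hq));
  destruct Hq as [_ [? ?]]; simpl in *; pose proof PI_RGT_0.

Lemma in_quadrant1_signs q : in_quadrant 1 q -> 0 < fst q /\ 0 <= snd q.
Proof.
  intros Hq; polar_in_quadrant q Hq; split.
  - apply Rmult_lt_0_compat; [assumption|apply cos_gt_0; lra].
  - apply Rmult_le_pos; [lra|apply sin_ge_0; lra].
Qed.

Lemma in_quadrant2_signs q : in_quadrant 2 q -> fst q <= 0 /\ 0 < snd q.
Proof.
  intros Hq; polar_in_quadrant q Hq; split.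
  - assert (cos (theta q) <= 0) by (apply cos_le_0; lra); nra.
  - apply Rmult_lt_0_compat; [assumption|apply sin_gt_0; lra].
Qed.

Lemma in_quadrant3_signs q : in_quadrant 3 q -> fst q < 0 /\ snd q <= 0.
Proof.
  intros Hq; polar_in_quadrant q Hq; split.
  - assert (cos (theta q) < 0) by (apply cos_lt_0; lra); nra.
  - assert (sin (theta q) <= 0) by (apply sin_le_0; lra); nra.
Qed.

Lemma in_quadrant4_signs q : in_quadrant 4 q -> 0 <= fst q /\ snd q < 0.
Proof.
  intros Hq; polar_in_quadrant q Hq; split.
  - replace (cos (theta q)) with (cos (theta q - 2 * PI))
      by (rewrite cos_minus, cos_2PI, sin_2PI; ring).
    assert (0 <= cos (theta q - 2 * PI)) by (apply cos_ge_0; lra); nra.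
  - assert (sin (theta q) < 0) by (apply sin_lt_0; lra); nra.
Qed.

Lemma on_ray_theta p q : p <> origin ->
  on_ray (theta p) q <-> exists r, 0 <= r /\ q = scal r p.
Proof.
  intros Hp; destruct (cos_sin_theta p Hp) as [C S], (pt_polar p Hp) as [E1 E2].
  pose proof (pnorm_gt0 p Hp); split.
  - intros [r [Hr ->]]; exists (r / pnorm p); split.
    + apply Rmult_le_pos; [assumption|apply Rlt_le, Rinv_0_lt_compat; assumption].
    + unfold scal; rewrite C, S; f_equal; field; lra.
  - intros [r [Hr ->]]; exists (r * pnorm p); split; [nra|].
    unfold scal; rewrite E1, E2; f_equal; ring.
Qed.

Lemma extreme_angle_points P : P <> nil ->
  exists pa pb, In pa P /\ In pb P /\ theta pa = theta_lb P /\ theta pb = theta_ub P.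
Proof.
  intros HP; assert (Hth : map theta P <> nil) by (intros H; apply HP, (map_eq_nil _ _ H)).
  destruct (proj1 (in_map_iff _ _ _) (min_list_in _ Hth)) as [pa [Ha Hpa]].
  destruct (proj1 (in_map_iff _ _ _) (max_list_in _ Hth)) as [pb [Hb Hpb]].
  exists pa, pb; auto.
Qed.

Definition reflect (s1 s2 : R) (q : pt) : pt := (s1 * fst q, s2 * snd q).

Section Reflection.

Variables s1 s2 : R.
Hypothesis s1_unit : s1 * s1 = 1.
Hypothesis s2_unit : s2 * s2 = 1.

Lemma reflect_involutive q : reflect s1 s2 (reflect s1 s2 q) = q.
Proof.
  destruct q as [x y]; unfold reflect; simpl; f_equal;
    [rewrite <- Rmult_assoc, s1_unit | rewrite <- Rmult_assoc, s2_unit]; ring.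
Qed.

Lemma dot_reflect a b : dot (reflect s1 s2 a) (reflect s1 s2 b) = dot a b.
Proof.
  unfold dot, reflect; simpl.
  replace (s1 * fst a * (s1 * fst b) + s2 * snd a * (s2 * snd b))
    with (s1 * s1 * (fst a * fst b) + s2 * s2 * (snd a * snd b)) by ring.
  rewrite s1_unit, s2_unit; ring.
Qed.

Lemma pnorm_reflect q : pnorm (reflect s1 s2 q) = pnorm q.
Proof. exact (f_equal sqrt (dot_reflect q q)). Qed.

Lemma cross_reflect a b : cross (reflect s1 s2 a) (reflect s1 s2 b) = s1 * s2 * cross a b.
Proof. unfold cross, reflect; simpl; ring. Qed.

Lemma reflect_scal r q : reflect s1 s2 (scal r q) = scal r (reflect s1 s2 q).
Proof. unfold reflect, scal; simpl; f_equal; ring. Qed.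

Lemma dseg_reflect q e : dseg (reflect s1 s2 q) (reflect s1 s2 e) = dseg q e.
Proof.
  unfold dseg, seg_param; rewrite !dot_reflect.
  set (t := clamp01 (dot q e / dot e e)).
  replace (t * fst (reflect s1 s2 e), t * snd (reflect s1 s2 e))
    with (reflect s1 s2 (scal t e)) by (unfold reflect, scal; simpl; f_equal; ring).
  unfold edist; replace (fst (reflect s1 s2 q) - fst (reflect s1 s2 (scal t e)),
                         snd (reflect s1 s2 q) - snd (reflect s1 s2 (scal t e)))
    with (reflect s1 s2 (fst q - fst (scal t e), snd q - snd (scal t e)))
    by (unfold reflect; simpl; f_equal; ring).
  apply pnorm_reflect.
Qed.

End Reflection.

Lemma reflect_axis (l : list R) (s : R) :
  l <> nil -> s * s = 1 -> (forall x, In x l -> 0 <= s * x) ->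
  let n := s * near_coord (min_list l) (max_list l) in
  let f := s * far_coord (min_list l) (max_list l) in
  (forall z, min_list l <= z <= max_list l <-> n <= s * z <= f) /\
  (forall z, z = min_list l \/ z = max_list l <-> s * z = n \/ s * z = f) /\
  (exists x, In x l /\ s * x = n) /\ (exists x, In x l /\ s * x = f) /\ 0 <= n.
Proof.
  intros Hl Hs Hpos n f.
  pose proof (min_list_in l Hl) as Hm; pose proof (max_list_in l Hl) as HM.
  pose proof (min_list_le l _ HM); pose proof (Hpos _ Hm); pose proof (Hpos _ HM).
  set (m := min_list l) in *; set (M := max_list l) in *.
  assert (Hcases : n = m /\ f = M /\ s = 1 \/ n = - M /\ f = - m /\ s = -1).
  { assert (Hs' : s = 1 \/ s = -1).
    { assert (Hfac : (s - 1) * (s + 1) = 0) by lra; apply Rmult_integral in Hfac; lra. }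
    unfold n, f, near_coord, far_coord; destruct Hs'; subst s.
    - rewrite (Rabs_pos_eq m), (Rabs_pos_eq M) by lra; destruct Rle_dec; lra.
    - rewrite (Rabs_left1 m), (Rabs_left1 M) by lra; destruct Rle_dec; lra. }
  destruct Hcases as [(-> & -> & ->)|(-> & -> & ->)]; (split; [|split; [|split; [|split]]]);
    try (intros z; split; lra); try (exists m; split; [assumption|lra]);
    try (exists M; split; [assumption|lra]); lra.
Qed.

Section ReflectedBoundingBox.

Variables s1 s2 : R.
Hypothesis s1_unit : s1 * s1 = 1.
Hypothesis s2_unit : s2 * s2 = 1.
Variable P : list pt.
Hypothesis P_nonempty : P <> nil.
Hypothesis P_signs : forall p, In p P -> 0 <= s1 * fst p /\ 0 <= s2 * snd p.

Local Notation cn := (reflect s1 s2 (c_near P)).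
Local Notation cf := (reflect s1 s2 (c_far P)).

Lemma reflect_xaxis : let n := fst cn in let f := fst cf in
  (forall z, xmin P <= z <= xmax P <-> n <= s1 * z <= f) /\
  (forall z, z = xmin P \/ z = xmax P <-> s1 * z = n \/ s1 * z = f) /\
  (exists x, In x (map fst P) /\ s1 * x = n) /\ (exists x, In x (map fst P) /\ s1 * x = f) /\
  0 <= n.
Proof.
  apply reflect_axis; [intros H; apply P_nonempty, (map_eq_nil _ _ H)|assumption|].
  intros x Hx; apply in_map_iff in Hx as [p [<- Hp]]; apply P_signs, Hp.
Qed.

Lemma reflect_yaxis : let n := snd cn in let f := snd cf in
  (forall z, ymin P <= z <= ymax P <-> n <= s2 * z <= f) /\
  (forall z, z = ymin P \/ z = ymax P <-> s2 * z = n \/ s2 * z = f) /\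
  (exists y, In y (map snd P) /\ s2 * y = n) /\ (exists y, In y (map snd P) /\ s2 * y = f) /\
  0 <= n.
Proof.
  apply reflect_axis; [intros H; apply P_nonempty, (map_eq_nil _ _ H)|assumption|].
  intros y Hy; apply in_map_iff in Hy as [p [<- Hp]]; apply P_signs, Hp.
Qed.

Lemma on_box_boundary_reflect q :
  on_box_boundary P q <-> on_rect_boundary (fst cn) (fst cf) (snd cn) (snd cf) (reflect s1 s2 q).
Proof.
  destruct reflect_xaxis as (Hx & Hxe & _), reflect_yaxis as (Hy & Hye & _).
  unfold on_box_boundary, in_box, on_rect_boundary, in_rect; simpl.
  rewrite (Hx (fst q)), (Hy (snd q)); pose proof (Hxe (fst q)); pose proof (Hye (snd q)); tauto.
Qed.

Lemma in_rect_reflect p : In p P -> in_rect (fst cn) (fst cf) (snd cn) (snd cf) (reflect s1 s2 p).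
Proof.
  intros Hp; destruct reflect_xaxis as (Hx & _), reflect_yaxis as (Hy & _).
  split; [apply Hx|apply Hy]; (split; [apply min_list_le|apply max_list_ge]); apply in_map, Hp.
Qed.

Lemma reflect_attains (f : pt -> R) (g : R -> R) (c : R) :
  (forall p, f (reflect s1 s2 p) = g (f p)) ->
  (exists x, In x (map f P) /\ g x = c) -> exists p, In p (map (reflect s1 s2) P) /\ f p = c.
Proof.
  intros Hf [x [Hx Hc]]; apply in_map_iff in Hx as [p [<- Hp]].
  exists (reflect s1 s2 p); split; [apply in_map, Hp|rewrite Hf; exact Hc].
Qed.

Lemma halfline_rect_exits_reflect pa q1 q2 : pa <> origin ->
  ray_box_intersections P (theta pa) q1 q2 ->
  halfline_rect_exits (fst cn) (fst cf) (snd cn) (snd cf)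
    (reflect s1 s2 pa) (reflect s1 s2 q1) (reflect s1 s2 q2).
Proof.
  intros Hpa (Hr1 & Hb1 & Hr2 & Hb2 & _ & Hext).
  assert (Hray : forall q,
    on_ray (theta pa) q <-> on_halfline (reflect s1 s2 pa) (reflect s1 s2 q)).
  { intros q; rewrite on_ray_theta by exact Hpa; split; intros [r [Hr Hq]]; exists r; split; auto.
    - rewrite Hq; apply reflect_scal.
    - rewrite <- (reflect_involutive s1 s2 s1_unit s2_unit q), Hq, reflect_scal,
        reflect_involutive; auto. }
  split; [apply Hray, Hr1|]; split; [apply on_box_boundary_reflect, Hb1|].
  split; [apply Hray, Hr2|]; split; [apply on_box_boundary_reflect, Hb2|].
  intros q Hq Hbq.
  assert (Hqq : reflect s1 s2 (reflect s1 s2 q) = q) by (apply reflect_involutive; assumption).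
  rewrite <- Hqq in Hq, Hbq.
  rewrite !pnorm_reflect, <- (pnorm_reflect s1 s2 s1_unit s2_unit q) by assumption.
  apply (Hext (reflect s1 s2 q)); [apply Hray|apply on_box_boundary_reflect]; assumption.
Qed.

End ReflectedBoundingBox.

Lemma dmax_reflect s1 s2 P e : s1 * s1 = 1 -> s2 * s2 = 1 ->
  dmax (map (reflect s1 s2) P) (reflect s1 s2 e) = dmax P e.
Proof.
  intros; unfold dmax; rewrite map_map; f_equal.
  apply map_ext; intros; apply dseg_reflect; assumption.
Qed.

Section Quadrant.

Variable k : nat.
Variables s1 s2 : R.
Variable P : list pt.
Variable e : pt.
Hypothesis s1_unit : s1 * s1 = 1.
Hypothesis s2_unit : s2 * s2 = 1.
Hypothesis quadrant_signs : forall q, in_quadrant k q -> 0 <= s1 * fst q /\ 0 <= s2 * snd q.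
Hypothesis quadrant_strict :
  (forall q, in_quadrant k q -> 0 < s1 * fst q) \/ (forall q, in_quadrant k q -> 0 < s2 * snd q).
Hypothesis P_nonempty : P <> nil.
Hypothesis P_in_quadrant : forall p, In p P -> in_quadrant k p.
Hypothesis e_in_quadrant : in_quadrant k e.

Local Notation X0 := (fst (reflect s1 s2 (c_near P))).
Local Notation Y0 := (snd (reflect s1 s2 (c_near P))).
Local Notation X1 := (fst (reflect s1 s2 (c_far P))).
Local Notation Y1 := (snd (reflect s1 s2 (c_far P))).
Local Notation P' := (map (reflect s1 s2) P).
Local Notation e' := (reflect s1 s2 e).

Lemma quadrant_points_signs p : In p P -> 0 <= s1 * fst p /\ 0 <= s2 * snd p.
Proof. auto. Qed.

Lemma reflected_near_corner_ge0 : 0 <= X0 /\ 0 <= Y0.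
Proof.
  split; [apply (reflect_xaxis s1 s2 s1_unit P P_nonempty quadrant_points_signs)
         |apply (reflect_yaxis s1 s2 s2_unit P P_nonempty quadrant_points_signs)].
Qed.

Lemma reflected_near_corner_nonzero : 0 < X0 \/ 0 < Y0.
Proof.
  destruct (reflect_xaxis s1 s2 s1_unit P P_nonempty quadrant_points_signs)
    as (_ & _ & [x [Hx Ex]] & _).
  destruct (reflect_yaxis s1 s2 s2_unit P P_nonempty quadrant_points_signs)
    as (_ & _ & [y [Hy Ey]] & _).
  destruct quadrant_strict as [Hs|Hs]; [left|right].
  - apply in_map_iff in Hx as [p [<- Hp]]; rewrite <- Ex; apply Hs, P_in_quadrant, Hp.
  - apply in_map_iff in Hy as [p [<- Hp]]; rewrite <- Ey; apply Hs, P_in_quadrant, Hp.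
Qed.

Lemma reflected_in_rect p : In p P' -> in_rect X0 X1 Y0 Y1 p.
Proof.
  intros Hp; apply in_map_iff in Hp as [q [<- Hq]].
  apply (in_rect_reflect s1 s2 s1_unit s2_unit P P_nonempty quadrant_points_signs), Hq.
Qed.

Lemma reflected_e_signs : 0 <= fst e' /\ 0 <= snd e'.
Proof. apply quadrant_signs, e_in_quadrant. Qed.

Lemma reflected_e_nonzero : 0 < dot e' e'.
Proof.
  rewrite dot_reflect, <- pnorm_sq by assumption.
  pose proof (pnorm_gt0 e (proj1 e_in_quadrant)); nra.
Qed.

Lemma reflected_exits a q1 q2 : In a P -> ray_box_intersections P (theta a) q1 q2 ->
  halfline_rect_exits X0 X1 Y0 Y1 (reflect s1 s2 a) (reflect s1 s2 q1) (reflect s1 s2 q2).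
Proof.
  intros Ha.
  apply (halfline_rect_exits_reflect s1 s2 s1_unit s2_unit P P_nonempty quadrant_points_signs).
  apply P_in_quadrant, Ha.
Qed.

Lemma reflected_attains_near :
  (exists p, In p P' /\ fst p = X0) /\ (exists p, In p P' /\ snd p = Y0).
Proof.
  split; [apply (reflect_attains s1 s2 P fst (Rmult s1)), (reflect_xaxis s1 s2 s1_unit P)
         |apply (reflect_attains s1 s2 P snd (Rmult s2)), (reflect_yaxis s1 s2 s2_unit P)];
    auto using quadrant_points_signs.
Qed.

Lemma reflected_attains_far :
  (exists p, In p P' /\ fst p = X1) /\ (exists p, In p P' /\ snd p = Y1).
Proof.
  split; [apply (reflect_attains s1 s2 P fst (Rmult s1)), (reflect_xaxis s1 s2 s1_unit P)
         |apply (reflect_attains s1 s2 P snd (Rmult s2)), (reflect_yaxis s1 s2 s2_unit P)];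
    auto using quadrant_points_signs.
Qed.

Lemma dseg_reflected q : dseg (reflect s1 s2 q) e' = dseg q e.
Proof. apply dseg_reflect; assumption. Qed.

Lemma exit_min_le_dmax_quadrant a q1 q2 : In a P -> ray_box_intersections P (theta a) q1 q2 ->
  Rmin (dseg q1 e) (dseg q2 e) <= dmax P e.
Proof.
  intros Ha Hq; rewrite <- (dmax_reflect s1 s2 P e), <- !dseg_reflected by assumption.
  destruct reflected_near_corner_ge0.
  apply (exit_min_le_dmax X0 X1 Y0 Y1) with (a := reflect s1 s2 a); try assumption.
  - exact reflected_near_corner_nonzero.
  - exact reflected_in_rect.
  - exact reflected_e_nonzero.
  - apply in_map, Ha.
  - apply reflected_exits; assumption.
Qed.

Lemma near_corner_le_dmax_quadrant : dseg (c_near P) e <= dmax P e.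
Proof.
  rewrite <- (dmax_reflect s1 s2 P e), <- dseg_reflected by assumption.
  destruct reflected_near_corner_ge0, reflected_e_signs.
  apply (near_corner_le_dmax X0 X1 Y0 Y1); try assumption; try apply reflected_attains_near.
  - exact reflected_in_rect.
  - exact reflected_e_nonzero.
Qed.

Lemma far_corner_le_dmax_quadrant :
  pnorm (c_far P) <= pnorm e -> dseg (c_far P) e <= dmax P e.
Proof.
  rewrite <- (dmax_reflect s1 s2 P e), <- dseg_reflected,
    <- (pnorm_reflect s1 s2 s1_unit s2_unit (c_far P)), <- (pnorm_reflect s1 s2 s1_unit s2_unit e)
    by assumption.
  destruct reflected_near_corner_ge0, reflected_e_signs.
  apply (far_corner_le_dmax X0 X1 Y0 Y1); try assumption; try apply reflected_attains_far.
  - exact reflected_in_rect.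
  - exact reflected_e_nonzero.
Qed.

(* A reflection reverses orientation when [s1 * s2 = -1]; then the roles of the two
   bounding lines are exchanged. *)
Lemma dmax_le_quadrant pa pb l1 l2 u1 u2 : In pa P -> In pb P ->
  (forall p, In p P -> 0 <= cross pa p /\ 0 <= cross p pb) ->
  ray_box_intersections P (theta pa) l1 l2 -> ray_box_intersections P (theta pb) u1 u2 ->
  dmax P e <= Rmax (dseg l2 e) (Rmax (dseg (c_far P) e) (dseg u2 e)).
Proof.
  intros Hpa Hpb Hwedge Hl Hu.
  apply reflected_exits in Hl; [|assumption]; apply reflected_exits in Hu; [|assumption].
  rewrite <- (dmax_reflect s1 s2 P e), <- !dseg_reflected by assumption.
  destruct reflected_near_corner_ge0 as [HX0 HY0].
  pose proof reflected_near_corner_nonzero as Hcn.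
  pose proof reflected_e_nonzero as He.
  assert (HP' : P' <> nil) by (intros H; apply P_nonempty, (map_eq_nil _ _ H)).
  assert (Horient : s1 * s2 = 1 \/ s1 * s2 = -1).
  { assert (Hfac : (s1 * s2 - 1) * (s1 * s2 + 1) = 0) by nra; apply Rmult_integral in Hfac; lra. }
  destruct Horient as [Horient|Horient].
  - assert (Hw : forall p, In p P' ->
              0 <= cross (reflect s1 s2 pa) p /\ 0 <= cross p (reflect s1 s2 pb)).
    { intros p Hp; apply in_map_iff in Hp as [q [<- Hq]]; rewrite !cross_reflect, Horient.
      destruct (Hwedge q Hq); lra. }
    exact (dmax_le_wedge_exits X0 X1 Y0 Y1 HX0 HY0 Hcn _ _ reflected_in_rect He
             _ _ _ _ _ _ HP' Hw Hl Hu).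
  - assert (Hw : forall p, In p P' ->
              0 <= cross (reflect s1 s2 pb) p /\ 0 <= cross p (reflect s1 s2 pa)).
    { intros p Hp; apply in_map_iff in Hp as [q [<- Hq]]; rewrite !cross_reflect, Horient.
      destruct (Hwedge q Hq); unfold cross in *; lra. }
    pose proof (dmax_le_wedge_exits X0 X1 Y0 Y1 HX0 HY0 Hcn _ _ reflected_in_rect He
                  _ _ _ _ _ _ HP' Hw Hu Hl).
    change (reflect s1 s2 (c_far P)) with (X1, Y1).
    unfold Rmax in *; repeat destruct Rle_dec; lra.
Qed.

End Quadrant.

Lemma quadrant_reflection k : (1 <= k <= 4)%nat ->
  exists s1 s2, s1 * s1 = 1 /\ s2 * s2 = 1 /\
    (forall q, in_quadrant k q -> 0 <= s1 * fst q /\ 0 <= s2 * snd q) /\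
    ((forall q, in_quadrant k q -> 0 < s1 * fst q) \/
     (forall q, in_quadrant k q -> 0 < s2 * snd q)).
Proof.
  intros Hk; assert (Hk4 : k = 1%nat \/ k = 2%nat \/ k = 3%nat \/ k = 4%nat) by lia.
  destruct Hk4 as [ -> | [ -> | [ -> | -> ]]].
  - exists 1, 1; split; [ring|]; split; [ring|]; split; [|left]; intros q Hq;
      destruct (in_quadrant1_signs q Hq); lra.
  - exists (-1), 1; split; [ring|]; split; [ring|]; split; [|right]; intros q Hq;
      destruct (in_quadrant2_signs q Hq); lra.
  - exists (-1), (-1); split; [ring|]; split; [ring|]; split; [|left]; intros q Hq;
      destruct (in_quadrant3_signs q Hq); lra.
  - exists 1, (-1); split; [ring|]; split; [ring|]; split; [|right]; intros q Hq;
      destruct (in_quadrant4_signs q Hq); lra.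
Qed.

Theorem theorem3 (k : nat) (P : list pt) (e l1 l2 u1 u2 : pt) :
  (1 <= k <= 4)%nat ->
  P <> nil ->
  (forall p, In p P -> in_quadrant k p) ->
  in_quadrant k e ->
  theta_lb P <= theta e <= theta_ub P ->
  ray_box_intersections P (theta_lb P) l1 l2 ->
  ray_box_intersections P (theta_ub P) u1 u2 ->
  let dmax := max_list (map (fun p => dseg p e) P) in
  let D := if Rlt_dec (edist origin e) (edist origin (c_far P))
           then dseg (c_near P) e else dseg (c_far P) e in
  let dlb := Rmax (Rmin (dseg l1 e) (dseg l2 e))
               (Rmax (Rmin (dseg u1 e) (dseg u2 e)) D) in
  let dint := max_list (map (fun q => dseg q e) (l1 :: l2 :: u1 :: u2 :: nil)) in
  let dub := Rmax dint (dseg (c_far P) e) in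
  dlb <= dmax /\ dmax <= dub.
Proof.
  intros Hk HPne HP He _ Hl Hu dmax' D dlb dint dub; change dmax' with (dmax P e).
  destruct (quadrant_reflection k Hk) as (s1 & s2 & Hs1 & Hs2 & Hsign & Hstrict).
  destruct (extreme_angle_points P HPne) as (pa & pb & Hpa & Hpb & Ea & Eb).
  rewrite <- Ea in Hl; rewrite <- Eb in Hu.
  assert (Hwedge : forall p, In p P -> 0 <= cross pa p /\ 0 <= cross p pb).
  { intros p Hp; split; apply (cross_nonneg_of_theta_le k); auto;
      [rewrite Ea; apply min_list_le|rewrite Eb; apply max_list_ge]; apply in_map, Hp. }
  assert (Hl2 : dseg l2 e <= dint) by (apply max_list_ge; simpl; auto).
  assert (Hu2 : dseg u2 e <= dint) by (apply max_list_ge; simpl; auto).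
  split.
  - apply Rmax_lub; [|apply Rmax_lub];
      [apply (exit_min_le_dmax_quadrant k s1 s2 P e) with (a := pa); auto
      |apply (exit_min_le_dmax_quadrant k s1 s2 P e) with (a := pb); auto|].
    unfold D; destruct Rlt_dec as [_|Hfar].
    + apply (near_corner_le_dmax_quadrant k s1 s2); auto.
    + rewrite !edist_origin in Hfar; apply (far_corner_le_dmax_quadrant k s1 s2); auto; lra.
  - eapply Rle_trans;
      [apply (dmax_le_quadrant k s1 s2 P e)
         with (pa := pa) (pb := pb) (l1 := l1) (l2 := l2) (u1 := u1) (u2 := u2); auto|].
    unfold dub, Rmax; repeat destruct Rle_dec; lra.
Qed.
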